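(* Let $G_1$ and $G_2$ be locally compact groupoids with open range maps such that $G_2^{(0)}$ is Hausdorff, and let $f\colon G_1\to G_2$ be a continuous groupoid morphism. Let $Z=G_1^{(0)}\times_{f,r}G_2=\{(x,\gamma):f(x)=r(\gamma)\}$, $\rho(x,\gamma)=x$, $\sigma(x,\gamma)=s(\gamma)$, with actions $g\cdot(x,\gamma)\cdot\gamma'=(r(g),f(g)\gamma\gamma')$. Then the generalized morphism $(Z,\rho,\sigma)$ is locally proper if and only if the map $(f,r,s)\colon G_1\to G_2\times G_1^{(0)}\times G_1^{(0)}$ is proper.
   Context: A space is locally compact if every point has a compact (quasi-compact Hausdorff) neighbourhood. A continuous map is proper if it is closed with quasi-compact fibres. The generalized morphism $(Z,\rho,\sigma)$ is locally proper if the left action of $G_1$ on $Z$ is $\sigma$-proper, i.e. the map $\{(g,z)\in G_1\times Z: s(g)=\rho(z)\}\to Z\times_{G_2^{(0)}}Z=\{(z,z'):\sigma(z)=\sigma(z')\}$, $(g,z)\mapsto(gz,z)$, is proper. *)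

From mathcomp Require Import all_boot.
From mathcomp Require Import all_classical all_reals all_analysis.
Set Implicit Arguments. Unset Strict Implicit. Unset Printing Implicit Defensive.
Local Open Scope classical_set_scope.

Definition rel_open {T : topologicalType} (A U : set T) :=
  exists V, open V /\ U = A `&` V.
Definition rel_closed {T : topologicalType} (A C : set T) :=
  exists K, closed K /\ C = A `&` K.

Definition rel_hausdorff {T : topologicalType} (A : set T) :=
  forall a b, A a -> A b -> a <> b ->
    exists U V, [/\ open U, open V, U a, V b & A `&` U `&` V = set0].

Definition locally_compact (T : topologicalType) :=
  forall x : T, exists N : set T, [/\ nbhs x N, compact N & rel_hausdorff N].

Definition proper_on {X Y : topologicalType} (A : set X) (B : set Y) (phi : X -> Y) :=
  [/\ (forall x, A x -> B (phi x)),
      (forall C, C `<=` A -> rel_closed A C -> rel_closed B (phi @` C)) &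
      (forall y, B y -> compact (A `&` phi @^-1` [set y]))].

Record groupoid_ops (G : Type) := GroupoidOps {
  gr : G -> G; gs : G -> G; ginv : G -> G; gmul : G -> G -> G }.

Definition units {G} (o : groupoid_ops G) : set G := range (gr o).
Definition composable {G} (o : groupoid_ops G) : set (G * G) :=
  [set p | gs o p.1 = gr o p.2].

Definition is_groupoid {G : Type} (o : groupoid_ops G) :=
  let r := gr o in let s := gs o in let m := gmul o in let i := ginv o in
  [/\ (forall g, r (r g) = r g /\ s (r g) = r g),
      (forall g, r (s g) = s g /\ s (s g) = s g),
      (forall g h, s g = r h -> r (m g h) = r g /\ s (m g h) = s h),
      (forall g h k, s g = r h -> s h = r k -> m (m g h) k = m g (m h k)) &
      (forall g, m (r g) g = g /\ m g (s g) = g) /\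
      (forall g, [/\ r (i g) = s g, s (i g) = r g, m g (i g) = r g & m (i g) g = s g])].

Definition is_top_groupoid {G : topologicalType} (o : groupoid_ops G) :=
  [/\ is_groupoid o, continuous (gr o), continuous (gs o), continuous (ginv o) &
      {within composable o, continuous (fun p : G * G => gmul o p.1 p.2)}].

Definition lc_groupoid_open_range {G : topologicalType} (o : groupoid_ops G) :=
  [/\ is_top_groupoid o, locally_compact G &
      forall U : set G, open U -> rel_open (units o) (gr o @` U)].

Definition groupoid_morphism {G1 G2 : Type} (o1 : groupoid_ops G1) (o2 : groupoid_ops G2)
  (f : G1 -> G2) :=
  forall g h, gs o1 g = gr o1 h ->
    gs o2 (f g) = gr o2 (f h) /\ f (gmul o1 g h) = gmul o2 (f g) (f h).

Definition Zspace {G1 G2 : Type} (o1 : groupoid_ops G1) (o2 : groupoid_ops G2)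
  (f : G1 -> G2) : set (G1 * G2) :=
  [set z | units o1 z.1 /\ f z.1 = gr o2 z.2].
Definition Zrho {G1 G2 : Type} (z : G1 * G2) : G1 := z.1.
Definition Zsigma {G1 G2 : Type} (o2 : groupoid_ops G2) (z : G1 * G2) : G2 := gs o2 z.2.
Definition Zlact {G1 G2 : Type} (o1 : groupoid_ops G1) (o2 : groupoid_ops G2)
  (f : G1 -> G2) (g : G1) (z : G1 * G2) : G1 * G2 :=
  (gr o1 g, gmul o2 (f g) z.2).

(* (Z, rho, sigma) locally proper: the left G1-action on Z is sigma-proper *)
Definition locally_proper {G1 G2 : topologicalType} (o1 : groupoid_ops G1)
  (o2 : groupoid_ops G2) (f : G1 -> G2) :=
  proper_on
    [set p : G1 * (G1 * G2) | Zspace o1 o2 f p.2 /\ gs o1 p.1 = Zrho p.2]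
    [set q : (G1 * G2) * (G1 * G2) |
       [/\ Zspace o1 o2 f q.1, Zspace o1 o2 f q.2 & Zsigma o2 q.1 = Zsigma o2 q.2]]
    (fun p => (Zlact o1 o2 f p.1 p.2, p.2)).

From mathcomp Require Import all_boot.
From mathcomp Require Import all_classical all_reals all_analysis.
Set Implicit Arguments. Unset Strict Implicit. Unset Printing Implicit Defensive.
Local Open Scope classical_set_scope.

(* With Zdiv ((x1, c1), (x2, c2)) := (c1 c2^-1, x1, x2), the domain of the
   action map (g, z) |-> (g z, z) is the fibre product of (f, r, s) and Zdiv,
   so the action map is a pullback of (f, r, s).  Conversely (f, r, s) lands
   in the set of triples (c, x, y) with r c = f x and s c = f y, which is
   closed because G2^(0) is Hausdorff, and there the section
   (c, x, y) |-> ((x, c), (y, f y)) exhibits (f, r, s) as a pullback of the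
   action map.  Pullbacks of proper maps are proper by the tube lemma. *)

Lemma fst_continuous (X Y : topologicalType) : continuous (@fst X Y).
Proof. by case=> x y; exact: cvg_fst. Qed.

Lemma snd_continuous (X Y : topologicalType) : continuous (@snd X Y).
Proof. by case=> x y; exact: cvg_snd. Qed.

Lemma fst_fst_continuous (X Y Z : topologicalType) : continuous (fun t : X * Y * Z => t.1.1).
Proof. by move=> t; exact: continuous_comp (@fst_continuous _ _ t) (@fst_continuous _ _ t.1). Qed.

Lemma snd_fst_continuous (X Y Z : topologicalType) : continuous (fun t : X * Y * Z => t.1.2).
Proof. by move=> t; exact: continuous_comp (@fst_continuous _ _ t) (@snd_continuous _ _ t.1). Qed.

Lemma fst_snd_continuous (X Y Z : topologicalType) : continuous (fun t : X * (Y * Z) => t.2.1).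
Proof. by move=> t; exact: continuous_comp (@snd_continuous _ _ t) (@fst_continuous _ _ t.2). Qed.

Lemma snd_snd_continuous (X Y Z : topologicalType) : continuous (fun t : X * (Y * Z) => t.2.2).
Proof. by move=> t; exact: continuous_comp (@snd_continuous _ _ t) (@snd_continuous _ _ t.2). Qed.

Lemma tube_lemma (X Y : topologicalType) (K : set X) (O : set (X * Y)) (y : Y) :
  compact K -> open O -> K `<=` [set x | O (x, y)] ->
  exists U N, [/\ open U, K `<=` U, nbhs y N & forall x y', U x -> N y' -> O (x, y')].
Proof.
move=> /compact_near_coveringP cK oO KO.
pose good (N : set Y) x := forall y', N y' -> O (x, y').
have : \forall N \near powerset_filter_from (nbhs y), K `<=` (good N)°.
  apply: cK => x Kx.
  have [[A B] /= [nA nB] ABO] : nbhs (x, y) O by apply: open_nbhs_nbhs; split; [|exact: KO].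
  near=> x' N; have nAx' : nbhs x' A by exact: (near (nbhs_interior nA) x').
  apply: filterS nAx' => x'' Ax'' y' Ny'.
  by apply: (ABO (x'', y')); split => //; exact: (near (small_set_sub nB) N).
move=> KN; have [N [KUN nN]] := filter_ex (filterI KN (near_small_set _)).
exists (good N)°, N; split => //; first exact: open_interior.
by move=> x y' /interior_subset; apply.
Unshelve. all: by end_near. Qed.

Lemma rel_closed_equalizer (T Y : topologicalType) (H : set Y) (A : set T) (a b : T -> Y) :
  rel_hausdorff H -> continuous a -> continuous b ->
  (forall t, A t -> H (a t) /\ H (b t)) ->
  rel_closed A (A `&` [set t | a t = b t]).
Proof.
move=> sepH ca cb HA; exists (closure (A `&` [set t | a t = b t])).
split; first exact: closed_closure.
apply/seteqP; split=> [t Et|t [At clt]]; first by split; [case: Et|exact: subset_closure].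
split=> //=; apply: contrapT => abt; have [Hat Hbt] := HA t At.
have [U [V [oU oV Uat Vbt UV0]]] := sepH _ _ Hat Hbt abt.
have nU : nbhs t (a @^-1` U) := ca t _ (open_nbhs_nbhs (conj oU Uat)).
have nV : nbhs t (b @^-1` V) := cb t _ (open_nbhs_nbhs (conj oV Vbt)).
have [s [[As /= abs] [Uas Vbs]]] := clt _ (filterI nU nV).
have : (H `&` U `&` V) (a s) by split; [split; [exact: (HA s As).1|]|rewrite abs].
by rewrite UV0.
Qed.

Lemma rel_closedI (T : topologicalType) (A E1 E2 : set T) :
  rel_closed A (A `&` E1) -> rel_closed A (A `&` E2) -> rel_closed A (A `&` (E1 `&` E2)).
Proof.
move=> [K1 [cK1 AE1]] [K2 [cK2 AE2]]; exists (K1 `&` K2); split; first exact: closedI.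
by rewrite setIIr AE1 AE2 -setIIr.
Qed.

Lemma proper_on_widen (X Y : topologicalType) (S : set X) (Q E : set Y) (p : X -> Y) :
  rel_closed Q (Q `&` E) -> (forall x, S x -> E (p x)) ->
  proper_on S (Q `&` E) p -> proper_on S Q p.
Proof.
move=> [K [cK QE_K]] SE [pS p_closed p_fibre]; split.
- by move=> x /pS [].
- move=> C CS /(p_closed C CS) [K' [cK' ->]].
  by exists (K `&` K'); split; [exact: closedI|rewrite setIA -QE_K].
- move=> y Qy; have [Ey|nEy] := pselect (E y); first exact: p_fibre.
  suff -> : S `&` p @^-1` [set y] = set0 by exact: compact0.
  by apply/seteqP; split=> // x [Sx /= pxy]; apply: nEy; rewrite -pxy; exact: SE.
Qed.

Lemma within_continuous_comp (T U V : topologicalType) (A : set T) (B : set U)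
    (h : T -> U) (g : U -> V) :
  {within A, continuous h} -> (forall t, A t -> B (h t)) -> {within B, continuous g} ->
  {within A, continuous (g \o h)}.
Proof.
move=> /subspace_continuousP hc hAB /subspace_continuousP gc.
apply/subspace_continuousP => t At; apply: cvg_comp (gc _ (hAB _ At)).
move=> P /(hc _ At) hBP; apply: filterS2 (withinT A (nbhs_filter t)) hBP.
by move=> t' At' /(_ (hAB _ At')).
Qed.

(* [u] and [q] identify [S] with the fibre product of [p] and [h]; [l] is the inverse. *)
Section ProperPullback.
Variables (X Y W V : topologicalType) (P : set X) (Q : set Y) (p : X -> Y).
Variables (D : set W) (h : W -> Y) (S : set V) (q : V -> W).
Variables (u : V -> X) (l : X -> W -> V).
Hypotheses (p_proper : proper_on P Q p) (hD : forall w, D w -> Q (h w)).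
Hypotheses (h_cont : {within D, continuous h})
           (l_cont : continuous (fun xw : X * W => l xw.1 xw.2)).
Hypothesis pullback_square : forall v, S v -> [/\ P (u v), D (q v) & p (u v) = h (q v)].
Hypothesis pullback_lift : forall x w, P x -> D w -> p x = h w ->
  [/\ S (l x w), u (l x w) = x & q (l x w) = w].
Hypothesis lift_of_square : forall v, S v -> l (u v) (q v) = v.

Lemma pullback_closed C : rel_closed S C -> rel_closed D (q @` C).
Proof.
have [_ p_closed p_fibre] := p_proper.
move=> [K [cK ->]]; exists (closure (q @` (S `&` K))); split; first exact: closed_closure.
apply/seteqP; split=> [_ [v [Sv Kv] <-]|w [Dw clw]].
  by split; [have [] := pullback_square Sv|apply: subset_closure; exists v].
apply: contrapT => qCw.
pose O := [set xw : X * W | ~ K (l xw.1 xw.2)].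
have oO : open O.
  by apply: closed_openC; exact: (continuous_closedP _).1 l_cont _ cK.
have fibre_O : P `&` p @^-1` [set h w] `<=` [set x | O (x, w)].
  move=> x [Px /= pxw] Klxw; have [Sl _ ql] := pullback_lift Px Dw pxw.
  by apply: qCw; exists (l x w).
have [U [N [oU fibreU Nw UNO]]] := tube_lemma (p_fibre _ (hD Dw)) oO fibre_O.
have [E [cE pUc]] : rel_closed Q (p @` (P `&` ~` U)).
  by apply: p_closed; [exact: subIsetl|exists (~` U); split; [exact: open_closedC|]].
have hw_notE : ~ E (h w).
  move=> Ehw; have : (p @` (P `&` ~` U)) (h w) by rewrite pUc; split => //; exact: hD.
  by case=> x [Px nUx] pxw; apply/nUx/fibreU.
have near_w : \forall w' \near w, D w' -> ~ E (h w').
  apply: ((subspace_continuousP _ _).1 h_cont w Dw (~` E)).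
  by apply: open_nbhs_nbhs; split; [exact: closed_openC|].
have [_ [[v [Sv Kv] <-] [nEqv Nqv]]] := clw _ (filterI near_w Nw).
have [Puv Dqv puv] := pullback_square Sv.
have Uuv : U (u v).
  apply: contrapT => nUuv; apply: (nEqv Dqv); rewrite -puv.
  suff : (p @` (P `&` ~` U)) (p (u v)) by rewrite pUc => -[].
  by exists (u v).
by apply: (UNO _ _ Uuv Nqv); rewrite /= lift_of_square.
Qed.

Lemma pullback_fibre w : D w -> compact (S `&` q @^-1` [set w]).
Proof.
move=> Dw; have [_ _ p_fibre] := p_proper.
have -> : S `&` q @^-1` [set w] = (l^~ w) @` (P `&` p @^-1` [set h w]).
  apply/seteqP; split=> [v [Sv /= <-]|_ [x [Px /= pxw] <-]].
    by have [Puv _ puv] := pullback_square Sv; exists (u v); [|exact: lift_of_square].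
  by have [Sl _ ql] := pullback_lift Px Dw pxw.
apply: continuous_compact; last exact: p_fibre (hD Dw).
apply: continuous_subspaceT => x.
have pair_w : (fun x' => (x', w)) @ x --> (x, w) by exact: cvg_pair cvg_id (cvg_cst w).
exact: continuous_comp pair_w (@l_cont (x, w)).
Qed.

Lemma proper_on_pullback : proper_on S D q.
Proof.
split=> [v /pullback_square []|C _|]; [by []|exact: pullback_closed|exact: pullback_fibre].
Qed.

End ProperPullback.

Section GroupoidAlgebra.
Variables (G : Type) (o : groupoid_ops G).

Lemma units_gr g : units o (gr o g).
Proof. by exists g. Qed.

Hypothesis Go : is_groupoid o.

Lemma gr_unit u : units o u -> gr o u = u.
Proof. by case: Go => grK _ _ _ _ [g _ <-]; exact: (grK g).1. Qed.

Lemma gs_unit u : units o u -> gs o u = u.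
Proof. by case: Go => grK _ _ _ _ [g _ <-]; exact: (grK g).2. Qed.

Lemma units_gs g : units o (gs o g).
Proof. by case: Go => _ gsK _ _ _; exists (gs o g) => //; exact: (gsK g).1. Qed.

Lemma gr_gs_gmul g h : gs o g = gr o h ->
  gr o (gmul o g h) = gr o g /\ gs o (gmul o g h) = gs o h.
Proof. by case: Go => _ _ gmul_ends _ _; exact: gmul_ends. Qed.

Lemma gmul_gr g : gmul o (gr o g) g = g.
Proof. by case: Go => _ _ _ _ [gmul_units _]; exact: (gmul_units g).1. Qed.

Lemma gmul_gs g : gmul o g (gs o g) = g.
Proof. by case: Go => _ _ _ _ [gmul_units _]; exact: (gmul_units g).2. Qed.

Lemma gr_ginv g : gr o (ginv o g) = gs o g.
Proof. by case: Go => _ _ _ _ [_ ginvP]; case: (ginvP g). Qed.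

Lemma gmulV g : gmul o g (ginv o g) = gr o g.
Proof. by case: Go => _ _ _ _ [_ ginvP]; case: (ginvP g). Qed.

Lemma gmulK g h : gs o g = gr o h -> gmul o (gmul o g h) (ginv o h) = g.
Proof.
case: (Go) => _ _ _ gmulA [_ ginvP] ghs; have [hr _ hV _] := ginvP h.
by rewrite gmulA // hV -ghs gmul_gs.
Qed.

Lemma gmulKV g h : gs o g = gs o h -> gmul o (gmul o g (ginv o h)) h = g.
Proof.
case: (Go) => _ _ _ gmulA [_ ginvP] ghs; have [hr hs _ Vh] := ginvP h.
by rewrite gmulA ?hr ?hs // Vh -ghs gmul_gs.
Qed.

End GroupoidAlgebra.

Section GroupoidMorphism.
Variables (G1 G2 : Type) (o1 : groupoid_ops G1) (o2 : groupoid_ops G2) (f : G1 -> G2).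
Hypotheses (Go1 : is_groupoid o1) (Go2 : is_groupoid o2) (fm : groupoid_morphism o1 o2 f).

Lemma morph_unit u : units o1 u -> gr o2 (f u) = f u /\ gs o2 (f u) = f u.
Proof.
move=> uu; have uuK : gmul o1 u u = u by rewrite -{1}(gr_unit Go1 uu) gmul_gr.
have [fus fuu] := @fm u u (etrans (gs_unit Go1 uu) (esym (gr_unit Go1 uu))).
rewrite uuK in fuu.
have fu_gr : gr o2 (f u) = f u by rewrite -(gmulV Go2) [X in gmul o2 X _]fuu (gmulK Go2 fus).
by rewrite fus fu_gr.
Qed.

Lemma units_morph u : units o1 u -> units o2 (f u).
Proof. by move=> /morph_unit [fur _]; exists (f u). Qed.

Lemma morph_gr g : f (gr o1 g) = gr o2 (f g).
Proof.
have [frg _] := @fm (gr o1 g) g (gs_unit Go1 (units_gr o1 g)).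
by rewrite -frg (morph_unit (units_gr o1 g)).2.
Qed.

Lemma morph_gs g : f (gs o1 g) = gs o2 (f g).
Proof.
have [fsg _] := @fm g (gs o1 g) (esym (gr_unit Go1 (units_gs Go1 g))).
by rewrite fsg (morph_unit (units_gs Go1 g)).1.
Qed.

End GroupoidMorphism.

Section ActionSquare.
Variables (G1 G2 : topologicalType) (o1 : groupoid_ops G1) (o2 : groupoid_ops G2).
Variable f : G1 -> G2.

Definition Zact_dom := [set p : G1 * (G1 * G2) | Zspace o1 o2 f p.2 /\ gs o1 p.1 = Zrho p.2].
Definition Zsigma_pairs := [set b : (G1 * G2) * (G1 * G2) |
  [/\ Zspace o1 o2 f b.1, Zspace o1 o2 f b.2 & Zsigma o2 b.1 = Zsigma o2 b.2]].
Definition Zact_pair (p : G1 * (G1 * G2)) := (Zlact o1 o2 f p.1 p.2, p.2).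

Definition frs (g : G1) := (f g, gr o1 g, gs o1 g).
Definition frs_target := [set t : G2 * G1 * G1 | units o1 t.1.2 /\ units o1 t.2].
Definition frs_compatible :=
  [set t : G2 * G1 * G1 | gr o2 t.1.1 = f t.1.2] `&` [set t | gs o2 t.1.1 = f t.2].

Definition Zdiv (b : (G1 * G2) * (G1 * G2)) := (gmul o2 b.1.2 (ginv o2 b.2.2), b.1.1, b.2.1).
Definition Zsection (t : G2 * G1 * G1) := ((t.1.2, t.1.1), (t.2, f t.2)).
Definition unit_point (g : G1) := (g, (gs o1 g, f (gs o1 g))).

Section SquareAlgebra.
Hypotheses (Go1 : is_groupoid o1) (Go2 : is_groupoid o2) (fm : groupoid_morphism o1 o2 f).

Lemma frs_in_target g : frs_target (frs g).
Proof. by split; [exact: units_gr|exact: units_gs]. Qed.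

Lemma frs_in_compatible g : frs_compatible (frs g).
Proof. by split; rewrite /= ?(morph_gr Go1 Go2 fm) ?(morph_gs Go1 Go2 fm). Qed.

Lemma Zdiv_in_target b : Zsigma_pairs b -> frs_target (Zdiv b).
Proof. by case=> [[ux1 _] [ux2 _] _]. Qed.

Lemma Zact_pair_in_pairs p : Zact_dom p -> Zsigma_pairs (Zact_pair p).
Proof.
case: p => g [x c] [[ux fxc] /= sgx].
have [rgc sgc] : gr o2 (gmul o2 (f g) c) = gr o2 (f g) /\ gs o2 (gmul o2 (f g) c) = gs o2 c.
  by apply: (gr_gs_gmul Go2); rewrite -(morph_gs Go1 Go2 fm) sgx.
split=> //; split; rewrite //= ?rgc ?(morph_gr Go1 Go2 fm) //; exact: units_gr.
Qed.

Lemma Zdiv_Zact_pair p : Zact_dom p -> Zdiv (Zact_pair p) = frs p.1.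
Proof.
case: p => g [x c] [[ux fxc] /= sgx].
by rewrite /Zdiv /frs /= (gmulK Go2) ?sgx // -(morph_gs Go1 Go2 fm) sgx.
Qed.

Lemma Zact_pair_lift g b : Zsigma_pairs b -> frs g = Zdiv b ->
  Zact_dom (g, b.2) /\ Zact_pair (g, b.2) = b.
Proof.
case: b => [[x1 c1] [x2 c2]] [[/= ux1 fxc1] [/= ux2 fxc2] /= sc12] [fg rg sg].
split; first by split; [split|].
by rewrite /Zact_pair /Zlact /= fg rg (gmulKV Go2 sc12).
Qed.

Lemma Zsection_in_pairs t : frs_target t -> frs_compatible t -> Zsigma_pairs (Zsection t).
Proof.
case: t => [[c x] y] [/= ux uy] [/= rc sc]; have [rfy sfy] := morph_unit Go1 Go2 fm uy.
by split; [|split|rewrite /Zsigma /= sc sfy].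
Qed.

Lemma unit_point_in_dom g : Zact_dom (unit_point g).
Proof.
have [rfs _] := morph_unit Go1 Go2 fm (units_gs Go1 g).
by split=> //; split=> //; exact: units_gs.
Qed.

Lemma Zact_pair_unit_point g : Zact_pair (unit_point g) = Zsection (frs g).
Proof. by rewrite /Zact_pair /Zlact /Zsection /= (morph_gs Go1 Go2 fm) (gmul_gs Go2). Qed.

Lemma Zact_pair_eq_Zsection p t : Zact_dom p -> Zact_pair p = Zsection t ->
  unit_point p.1 = p /\ frs p.1 = t.
Proof.
case: t p => [[c x] y] [g [x' c']] [_ /= sgx'] [rgx fgc x'y c'fy].
rewrite /unit_point /frs /= sgx' x'y -c'fy; split=> //.
by rewrite rgx -fgc c'fy -x'y -sgx' (morph_gs Go1 Go2 fm) (gmul_gs Go2).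
Qed.

End SquareAlgebra.

Lemma Zsection_continuous : continuous f -> continuous Zsection.
Proof.
move=> fc t; have t2 := @snd_continuous _ _ t.
exact: cvg_pair (cvg_pair (@snd_fst_continuous _ _ _ t) (@fst_fst_continuous _ _ _ t))
                (cvg_pair t2 (continuous_comp t2 (fc t.2))).
Qed.

Lemma Zdiv_continuous : is_top_groupoid o2 -> {within Zsigma_pairs, continuous Zdiv}.
Proof.
case=> Go2 _ _ ginv_cont gmul_cont.
pose h (b : (G1 * G2) * (G1 * G2)) := (b.1.2, ginv o2 b.2.2).
have h_cont : continuous h.
  by move=> b; exact: cvg_pair (@snd_fst_continuous _ _ _ b)
                        (continuous_comp (@snd_snd_continuous _ _ _ b) (ginv_cont _)).
have h_composable b : Zsigma_pairs b -> composable o2 (h b).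
  by case=> _ _ sb; rewrite /composable /= (gr_ginv Go2).
have /subspace_continuousP m_cont :=
  within_continuous_comp (continuous_subspaceT h_cont) h_composable gmul_cont.
have /subspace_continuousP x1_cont :=
  continuous_subspaceT (A := Zsigma_pairs) (@fst_fst_continuous G1 G2 _).
have /subspace_continuousP x2_cont :=
  continuous_subspaceT (A := Zsigma_pairs) (@fst_snd_continuous _ G1 G2).
apply/subspace_continuousP => b Bb.
exact: cvg_pair (cvg_pair (m_cont b Bb) (x1_cont b Bb)) (x2_cont b Bb).
Qed.

End ActionSquare.

Section ProperEquivalence.
Variables (G1 G2 : topologicalType) (o1 : groupoid_ops G1) (o2 : groupoid_ops G2).
Variable f : G1 -> G2.
Hypotheses (Go1 : is_groupoid o1) (Go2 : is_groupoid o2) (fm : groupoid_morphism o1 o2 f).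

Lemma Zact_pair_proper : {within Zsigma_pairs o1 o2 f, continuous Zdiv o2} ->
  proper_on setT (frs_target o1) (frs o1 f) ->
  proper_on (Zact_dom o1 o2 f) (Zsigma_pairs o1 o2 f) (Zact_pair o1 o2 f).
Proof.
move=> Zdiv_cont frs_proper.
apply: (proper_on_pullback (u := fst) (l := fun x b => (x, b.2)) frs_proper _ Zdiv_cont).
- by move=> b; exact: Zdiv_in_target.
- by move=> xb; exact: cvg_pair (@fst_continuous _ _ xb) (@snd_snd_continuous _ _ _ xb).
- move=> p Ap; rewrite (Zdiv_Zact_pair Go1 Go2 fm Ap).
  by split=> //; exact: Zact_pair_in_pairs.
- by move=> g b _ Bb /(Zact_pair_lift Go2 Bb) [].
- by case.
Qed.

Lemma frs_proper_on_compatible : continuous f ->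
  proper_on (Zact_dom o1 o2 f) (Zsigma_pairs o1 o2 f) (Zact_pair o1 o2 f) ->
  proper_on setT (frs_target o1 `&` frs_compatible o2 f) (frs o1 f).
Proof.
move=> fc Zact_proper.
apply: (proper_on_pullback (h := Zsection f) (u := unit_point o1 f) (l := fun p _ => p.1)
  Zact_proper).
- by move=> t [Tt Ct]; exact: (Zsection_in_pairs Go1 Go2 fm).
- exact: continuous_subspaceT (Zsection_continuous fc).
- by move=> pt; exact: fst_fst_continuous.
- move=> g _; rewrite (Zact_pair_unit_point Go1 Go2 fm); split=> //.
    exact: unit_point_in_dom.
  by split; [exact: frs_in_target|exact: frs_in_compatible].
- by move=> p t Ap _ /(Zact_pair_eq_Zsection Go1 Go2 fm Ap) [].
- by [].
Qed.

Lemma frs_compatible_rel_closed : continuous f -> is_top_groupoid o2 ->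
  rel_hausdorff (units o2) -> rel_closed (frs_target o1) (frs_target o1 `&` frs_compatible o2 f).
Proof.
move=> fc [_ gr_cont gs_cont _ _] sep2; apply: rel_closedI.
- apply: rel_closed_equalizer sep2 _ _ _.
  + by move=> t; exact: continuous_comp (@fst_fst_continuous _ _ _ t) (gr_cont _).
  + by move=> t; exact: continuous_comp (@snd_fst_continuous _ _ _ t) (fc _).
  + by move=> t [ux _]; split; [exact: units_gr|exact: (units_morph Go1 Go2 fm)].
- apply: rel_closed_equalizer sep2 _ _ _.
  + by move=> t; exact: continuous_comp (@fst_fst_continuous _ _ _ t) (gs_cont _).
  + by move=> t; exact: continuous_comp (@snd_continuous _ _ t) (fc _).
  + by move=> t [_ uy]; split; [exact: (units_gs Go2)|exact: (units_morph Go1 Go2 fm)].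
Qed.

End ProperEquivalence.

Theorem proposition7p4 (G1 G2 : topologicalType)
  (o1 : groupoid_ops G1) (o2 : groupoid_ops G2) (f : G1 -> G2) :
  lc_groupoid_open_range o1 -> lc_groupoid_open_range o2 ->
  rel_hausdorff (units o2) ->
  continuous f -> groupoid_morphism o1 o2 f ->
  (locally_proper o1 o2 f <->
   proper_on [set: G1] [set t : G2 * G1 * G1 | units o1 t.1.2 /\ units o1 t.2]
     (fun g => (f g, gr o1 g, gs o1 g))).
Proof.
move=> [T1 _ _] [T2 _ _] sep2 fc fm.
have [Go1 _ _ _ _] := T1; have [Go2 _ _ _ _] := T2.
split=> [Zact_proper|frs_proper].
- apply: (proper_on_widen (frs_compatible_rel_closed Go1 Go2 fm fc T2 sep2)).
    by move=> g _; exact: (frs_in_compatible Go1 Go2 fm).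
  exact: frs_proper_on_compatible.
- exact: Zact_pair_proper (Zdiv_continuous T2) frs_proper.
Qed.
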